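(* For every integer $k\ge1$, with $r_k$, $C_{\mathrm{Td}}$, $C_\sigma$, $C_\chi$ as below, one has \[ \frac{C_{\mathrm{Td}}}{C_\sigma+C_\chi}>4^k,\qquad \frac{C_\sigma}{C_\chi}\ge 3^k . \] Here $r_k$ is defined by $\binom{4k}{2k}B_k^2\,r_k=B_{2k}$, and $C_{\mathrm{Td}}=2^{4k+1}\big[(2^{4k-1}-1)(1-r_k)+(3-2^{2k+1})\big]$, $C_\sigma=1+r_k$, $C_\chi=2^{4k+1}(2^{2k}-1)^2\frac{B_{2k}}{(4k)!}$.
   Context: $B_m$ denotes the $m$-th Bernoulli number without sign, $B_m = \frac{(2m)!\,\zeta(2m)}{2^{2m-1}\pi^{2m}}$ (so $B_1=1/6$, $B_2=1/30$), where $\zeta$ is the Riemann zeta function. *)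

From Stdlib Require Import Reals Arith Factorial.
From Coquelicot Require Import Coquelicot.
Open Scope R_scope.

Definition zeta_nat (s : nat) : R :=
  Series (fun n : nat => / (INR (S n)) ^ s).

(* Unsigned Bernoulli number B_m = (2m)! zeta(2m) / (2^(2m-1) pi^(2m)),
   so B_1 = 1/6, B_2 = 1/30. Used for m >= 1. *)
Definition bern (m : nat) : R :=
  INR (fact (2 * m)) * zeta_nat (2 * m) / (2 ^ (2 * m - 1) * PI ^ (2 * m)).

Definition C_Td (k : nat) (r : R) : R :=
  2 ^ (4 * k + 1) * ((2 ^ (4 * k - 1) - 1) * (1 - r) + (3 - 2 ^ (2 * k + 1))).

Definition C_sigma (r : R) : R := 1 + r.

Definition C_chi (k : nat) : R :=
  2 ^ (4 * k + 1) * (2 ^ (2 * k) - 1) ^ 2 * (bern (2 * k) / INR (fact (4 * k))).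

(* Unfolding the definition of the unsigned Bernoulli numbers through zeta,
   the hypothesis defining r_k becomes  r_k = zeta(4k) / (2 zeta(2k)^2)  and
   C_chi = 4 (4^k - 1)^2 zeta(4k) / (pi^4)^k.  The two inequalities then only
   depend on
   - the exact values zeta(2) = pi^2/6 and zeta(4) = pi^4/90 (the case k = 1,
     where the second inequality is an equality);
   - the elementary bounds 1 <= zeta(4k) <= zeta(2k) and zeta(4k) <= zeta(4),
     which give 0 <= r_k <= 1/2 and 3^k C_chi <= 1 for k >= 2.
   The exact values are proved from scratch with the moment integrals
   W(p, n) = int_0^(pi/2) x^(2p) cos(x)^(2n) dx: integration by parts gives a
   recurrence linking the ratios W(p, n) / W(0, n) for p = 1, 2, whose
   telescoped form expresses the partial sums of sum 1/n^2 and sum 1/n^4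
   through ratios that tend to 0.  The file develops, in order: integration
   tools, the moment integrals, the two zeta values, monotonicity of zeta,
   the translation of the constants into zeta values, and the final case
   analysis k = 1 / k >= 2. *)

From Stdlib Require Import Reals Factorial Lra Lia.
From Coquelicot Require Import Coquelicot.
Open Scope R_scope.

Lemma is_derive_eq (f : R -> R) (x l l' : R) :
  is_derive f x l -> l = l' -> is_derive f x l'.
Proof. now intros H <-. Qed.

Lemma RInt_primitive (F f : R -> R) (a b : R) :
  (forall x, is_derive F x (f x)) -> (forall x, continuous f x) ->
  RInt f a b = F b - F a.
Proof.
  intros HF Hf. apply is_RInt_unique, (is_RInt_derive F f a b); intros; auto.
Qed.

Lemma ex_RInt_continuous_R (f : R -> R) (a b : R) :
  (forall x, continuous f x) -> ex_RInt f a b.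
Proof. intros Hf. apply (@ex_RInt_continuous R_CompleteNormedModule); auto. Qed.

(* Linearity in the shape produced by the integration-by-parts recurrence. *)
Lemma RInt_comb3 (f g h : R -> R) (a b u v w : R) :
  (forall x, continuous f x) -> (forall x, continuous g x) ->
  (forall x, continuous h x) ->
  RInt (fun x => u * f x + v * g x - w * h x) a b
  = u * RInt f a b + v * RInt g a b - w * RInt h a b.
Proof.
  intros Hf Hg Hh.
  apply ex_RInt_continuous_R with (a := a) (b := b) in Hf, Hg, Hh.
  pose proof (@ex_RInt_scal R_CompleteNormedModule) as Hscal.
  pose proof (@ex_RInt_plus R_CompleteNormedModule) as Hplus.
  change (RInt (fun x => minus (plus (scal u (f x)) (scal v (g x))) (scal w (h x))) a b
          = minus (plus (scal u (RInt f a b)) (scal v (RInt g a b))) (scal w (RInt h a b))).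
  rewrite (@RInt_minus R_CompleteNormedModule), (@RInt_plus R_CompleteNormedModule),
    !(@RInt_scal R_CompleteNormedModule); auto.
Qed.

Lemma RInt_comb2 (f h : R -> R) (a b u w : R) :
  (forall x, continuous f x) -> (forall x, continuous h x) ->
  RInt (fun x => u * f x - w * h x) a b = u * RInt f a b - w * RInt h a b.
Proof.
  intros Hf Hh.
  rewrite <- (Rplus_0_r (u * RInt f a b)), <- (Rmult_0_l (RInt f a b)),
    <- RInt_comb3 by auto.
  apply RInt_ext. intros x _. rewrite Rmult_0_l, Rplus_0_r. reflexivity.
Qed.

(** * The moment integrals W(p, n) = int_0^(pi/2) x^(2p) cos(x)^(2n) dx *)

Definition c (x : R) : R := cos x ^ 2.

Definition moment (p n : nat) : R :=
  RInt (fun x => x ^ (2 * p) * c x ^ n) 0 (PI / 2).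

Lemma continuous_moment_integrand (p n : nat) (x : R) :
  continuous (fun t => t ^ (2 * p) * c t ^ n) x.
Proof.
  apply (@ex_derive_continuous R_AbsRing R_NormedModule). unfold c. auto_derive; auto.
Qed.

Lemma is_derive_c_pow (n : nat) (x : R) :
  is_derive (fun t => c t ^ S n) x (- (2 * INR n + 2) * (sin x * cos x) * c x ^ n).
Proof.
  unfold c. auto_derive; [auto|].
  change (match n with 0%nat => 1 | S _ => INR n + 1 end) with (INR (S n)).
  replace (cos x * (cos x * 1)) with (cos x ^ 2) by ring.
  rewrite S_INR. ring.
Qed.

Lemma is_derive_cos_sin_c_pow (n : nat) (x : R) :
  is_derive (fun t => cos t * sin t * c t ^ n) x
    ((2 * INR n + 2) * c x ^ S n - (2 * INR n + 1) * c x ^ n).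
Proof.
  assert (Hsin : sin x ^ 2 = 1 - cos x ^ 2)
    by (rewrite <- (sin2_cos2 x); unfold Rsqr; ring).
  destruct n as [|n].
  - unfold c. auto_derive; [auto|]. simpl in *. nra.
  - eapply is_derive_eq.
    { apply (is_derive_mult (fun t => cos t * sin t) (fun t => c t ^ S n)).
      - auto_derive; auto.
      - apply is_derive_c_pow.
      - intros; apply Rmult_comm. }
    rewrite S_INR. unfold plus, mult; simpl.
    set (y := c x ^ n). unfold c. clearbody y.
    ring_simplify. rewrite Hsin. ring.
Qed.

(* The primitive behind the integration by parts relating W(p-1, n+1),
   W(p, n+1) and W(p, n). *)
Lemma is_derive_moment_primitive (p n : nat) (x : R) :
  is_derive
    (fun t => INR p * t ^ (2 * p - 1) * c t ^ S n
              + (INR n + 1) * (t ^ (2 * p) * (cos t * sin t * c t ^ n))) x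
    (INR p * (2 * INR p - 1) * (x ^ (2 * (p - 1)) * c x ^ S n)
     + (INR n + 1) * (2 * INR n + 2) * (x ^ (2 * p) * c x ^ S n)
     - (INR n + 1) * (2 * INR n + 1) * (x ^ (2 * p) * c x ^ n)).
Proof.
  eapply is_derive_eq.
  { apply (is_derive_plus (fun t => INR p * t ^ (2 * p - 1) * c t ^ S n)).
    - apply (is_derive_mult (fun t => INR p * t ^ (2 * p - 1))).
      + auto_derive; auto.
      + apply is_derive_c_pow.
      + intros; apply Rmult_comm.
    - apply is_derive_scal. apply (is_derive_mult (fun t => t ^ (2 * p))).
      + auto_derive; auto.
      + apply is_derive_cos_sin_c_pow.
      + intros; apply Rmult_comm. }
  unfold plus, mult, scal; simpl. unfold mult; simpl.
  destruct p as [|q]; [simpl; ring|].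
  replace (S q + (S q + 0) - 1)%nat with (S (2 * q)) by lia.
  replace (S q + (S q + 0))%nat with (S (S (2 * q))) by lia.
  replace (S q - 1 + (S q - 1 + 0))%nat with (2 * q)%nat by lia.
  cbn [Nat.pred]. rewrite <- !tech_pow_Rmult, !S_INR, mult_INR. simpl INR.
  ring.
Qed.

(* Integration by parts:
   p(2p-1) W(p-1,n+1) + (n+1)(2n+2) W(p,n+1) = (n+1)(2n+1) W(p,n).
   For p = 0 this is Wallis' recurrence. *)
Lemma moment_rec (p n : nat) :
  INR p * (2 * INR p - 1) * moment (p - 1) (S n)
  + (INR n + 1) * (2 * INR n + 2) * moment p (S n)
  - (INR n + 1) * (2 * INR n + 1) * moment p n = 0.
Proof.
  unfold moment. rewrite <- RInt_comb3 by apply continuous_moment_integrand.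
  rewrite (RInt_primitive _ _ _ _ (is_derive_moment_primitive p n)).
  - unfold c. rewrite cos_PI2, sin_0.
    destruct p as [|q]; [simpl; ring|].
    rewrite (pow_i (2 * S q - 1)) by lia. simpl. ring.
  - intros x. apply (@ex_derive_continuous R_AbsRing R_NormedModule).
    unfold c. auto_derive; auto.
Qed.

Lemma moment_0 (p : nat) : moment p 0 = (PI / 2) ^ (2 * p + 1) / INR (2 * p + 1).
Proof.
  assert (Hp : INR (S (2 * p)) <> 0) by (apply not_0_INR; lia).
  unfold moment. rewrite (RInt_primitive (fun x => x ^ (2 * p + 1) / INR (2 * p + 1))).
  - rewrite pow_i, Nat.add_1_r by lia. field; auto.
  - intros x. auto_derive; auto.
    replace (p + (p + 0) + 1)%nat with (S (2 * p)) by lia.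
    rewrite Nat.pred_succ, pow_O. field; auto.
  - intros x. apply continuous_moment_integrand.
Qed.

Lemma moment_nonneg (p n : nat) : 0 <= moment p n.
Proof.
  pose proof PI_RGT_0.
  apply RInt_ge_0; [lra| apply ex_RInt_continuous_R, continuous_moment_integrand |].
  intros x _. rewrite pow_mult. apply Rmult_le_pos; apply pow_le; [apply pow2_ge_0|].
  apply pow2_ge_0.
Qed.

Lemma wallis (n : nat) : moment 0 (S n) = (2 * INR n + 1) / (2 * INR n + 2) * moment 0 n.
Proof.
  pose proof (moment_rec 0 n). pose proof (pos_INR n). simpl INR in *.
  field_simplify_eq; nra.
Qed.

(* W(0, n) > 0, so the normalized moments below are well defined. *)
Lemma moment_0_pos (n : nat) : 0 < moment 0 n.
Proof.
  induction n as [|n IH].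
  - rewrite moment_0. simpl. pose proof PI_RGT_0. lra.
  - rewrite wallis. pose proof (pos_INR n).
    apply Rmult_lt_0_compat; auto. apply Rdiv_lt_0_compat; lra.
Qed.

(* x cos x <= sin x on [0, pi/2], as int_0^x t sin t dt >= 0. *)
Lemma x_cos_le_sin (x : R) : 0 <= x <= PI / 2 -> x * cos x <= sin x.
Proof.
  intros Hx. pose proof PI_RGT_0.
  assert (Hint : 0 <= RInt (fun t => t * sin t) 0 x).
  { apply RInt_ge_0; [lra| |].
    - apply ex_RInt_continuous_R. intros t.
      apply (@ex_derive_continuous R_AbsRing R_NormedModule). auto_derive; auto.
    - intros t Ht. apply Rmult_le_pos; [lra|]. apply sin_ge_0; lra. }
  rewrite (RInt_primitive (fun t => sin t - t * cos t)) in Hint.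
  - rewrite sin_0, cos_0 in Hint. lra.
  - intros t. auto_derive; auto. ring.
  - intros t. apply (@ex_derive_continuous R_AbsRing R_NormedModule). auto_derive; auto.
Qed.

(* Pointwise comparison behind the decay of the moment ratios:
   x^2 cos(x)^(2m+2) <= sin(x)^2 cos(x)^(2m) = cos(x)^(2m) - cos(x)^(2m+2). *)
Lemma x2_c_pow_le (x : R) (m : nat) :
  0 < x < PI / 2 -> x ^ 2 * c x ^ S m <= c x ^ m - c x ^ S m.
Proof.
  intros Hx. pose proof (x_cos_le_sin x ltac:(lra)) as Hxs.
  assert (Hcos : 0 <= cos x) by (apply cos_ge_0; lra).
  assert (Hsq : (x * cos x) ^ 2 <= sin x ^ 2)
    by (apply pow_incr; split; [apply Rmult_le_pos|]; lra).
  assert (Hsin : sin x ^ 2 = 1 - c x)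
    by (unfold c; rewrite <- (sin2_cos2 x); unfold Rsqr; ring).
  assert (Hy : 0 <= c x ^ m) by (apply pow_le; unfold c; apply pow2_ge_0).
  change (c x ^ S m) with (c x * c x ^ m).
  replace (x ^ 2 * (c x * c x ^ m)) with (x ^ 2 * c x * c x ^ m) by ring.
  replace (c x ^ m - c x * c x ^ m) with ((1 - c x) * c x ^ m) by ring.
  apply Rmult_le_compat_r; auto.
  rewrite Rpow_mult_distr in Hsq. unfold c in *. lra.
Qed.

Lemma moment_bound (p m : nat) :
  moment (S p) (S m) <= (PI / 2) ^ (2 * p) * moment 0 m - (PI / 2) ^ (2 * p) * moment 0 (S m).
Proof.
  pose proof PI_RGT_0.
  unfold moment. rewrite <- RInt_comb2 by apply continuous_moment_integrand.
  apply RInt_le; [lra| apply ex_RInt_continuous_R, continuous_moment_integrand | |].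
  - apply ex_RInt_continuous_R. intros x.
    apply (@ex_derive_continuous R_AbsRing R_NormedModule). unfold c. auto_derive; auto.
  - intros x Hx.
    change (x ^ (2 * 0)) with 1. rewrite !Rmult_1_l, <- Rmult_minus_distr_l.
    replace (2 * S p)%nat with (2 * p + 2)%nat by lia.
    rewrite pow_add, Rmult_assoc.
    apply Rle_trans with ((PI / 2) ^ (2 * p) * (x ^ 2 * c x ^ S m)).
    + apply Rmult_le_compat_r; [|apply pow_incr; lra].
      apply Rmult_le_pos; [apply pow2_ge_0| apply pow_le, pow2_ge_0].
    + apply Rmult_le_compat_l; [apply pow_le; lra| apply x2_c_pow_le; exact Hx].
Qed.

Definition moment_ratio (p n : nat) : R := moment p n / moment 0 n.

Lemma moment_ratio_0 (n : nat) : moment_ratio 0 n = 1.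
Proof. unfold moment_ratio. pose proof (moment_0_pos n). field. lra. Qed.

Lemma moment_ratio_init (p : nat) :
  moment_ratio p 0 = (PI / 2) ^ (2 * p) / (2 * INR p + 1).
Proof.
  unfold moment_ratio. rewrite !moment_0, plus_INR, mult_INR. pose proof PI_RGT_0.
  pose proof (pos_INR p). rewrite pow_add. simpl. field. lra.
Qed.

Lemma moment_ratio_rec (p n : nat) :
  moment_ratio p (S n)
  = moment_ratio p n - INR p * (2 * INR p - 1) / (2 * (INR n + 1) ^ 2) * moment_ratio (p - 1) (S n).
Proof.
  pose proof (moment_rec p n) as Hrec. pose proof (wallis n) as Hw.
  pose proof (moment_0_pos n). pose proof (moment_0_pos (S n)). pose proof (pos_INR n).
  unfold moment_ratio. rewrite Hw in *.
  assert (Hp : moment p (S n) =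
    ((INR n + 1) * (2 * INR n + 1) * moment p n
     - INR p * (2 * INR p - 1) * moment (p - 1) (S n)) / ((INR n + 1) * (2 * INR n + 2)))
    by (field_simplify_eq; lra).
  rewrite Hp. field. repeat split; lra.
Qed.

(* Combined with Wallis' recurrence, moment_bound gives a decay in O(1/n). *)
Lemma moment_ratio_bound (p n : nat) :
  0 <= moment_ratio (S p) (S n) <= (PI / 2) ^ (2 * p) / (2 * INR n + 1).
Proof.
  pose proof (moment_bound p n) as Hb. pose proof (moment_nonneg (S p) (S n)).
  pose proof (moment_0_pos n) as Hw. pose proof (pos_INR n).
  unfold moment_ratio. rewrite wallis in *.
  set (w := moment 0 n) in *. set (P := (PI / 2) ^ (2 * p)) in *.
  set (s := (2 * INR n + 1) / (2 * INR n + 2)).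
  assert (Hs : 0 < s * w) by (apply Rmult_lt_0_compat; [apply Rdiv_lt_0_compat|]; lra).
  split; [apply Rdiv_le_0_compat; lra|].
  apply (Rmult_le_reg_r (s * w)); [exact Hs|].
  unfold Rdiv at 1. rewrite Rmult_assoc, Rinv_l, Rmult_1_r by lra.
  replace (P / (2 * INR n + 1) * (s * w)) with (P * w - P * (s * w))
    by (unfold s; field; lra).
  exact Hb.
Qed.

Lemma is_lim_seq_inv_odd : is_lim_seq (fun n => / (2 * INR n + 1)) 0.
Proof.
  apply is_lim_seq_le_le with (u := fun _ => 0) (w := fun n => / INR (S n)).
  - intros n. pose proof (pos_INR n). rewrite S_INR. split.
    + apply Rlt_le, Rinv_0_lt_compat; lra.
    + apply Rinv_le_contravar; lra.
  - apply is_lim_seq_const.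
  - replace (Finite 0) with (Rbar_inv p_infty) by reflexivity.
    apply (is_lim_seq_inv (fun n => INR (S n)) p_infty); [|discriminate].
    apply -> (is_lim_seq_incr_1 INR p_infty). apply is_lim_seq_INR.
Qed.

Lemma moment_ratio_lim (p : nat) : is_lim_seq (fun n => moment_ratio (S p) (S n)) 0.
Proof.
  apply is_lim_seq_le_le with (u := fun _ => 0)
    (w := fun n => (PI / 2) ^ (2 * p) * / (2 * INR n + 1)).
  - intros n. apply moment_ratio_bound.
  - apply is_lim_seq_const.
  - replace (Finite 0) with (Rbar_mult ((PI / 2) ^ (2 * p)) 0) by (simpl; f_equal; ring).
    apply is_lim_seq_scal_l, is_lim_seq_inv_odd.
Qed.

(** * zeta(2) = pi^2/6 and zeta(4) = pi^4/90 *)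

Lemma moment_ratio_1_rec (n : nat) :
  moment_ratio 1 (S n) = moment_ratio 1 n - / (2 * (INR n + 1) ^ 2).
Proof.
  rewrite moment_ratio_rec, moment_ratio_0. pose proof (pos_INR n). simpl INR. field. lra.
Qed.

Lemma moment_ratio_2_rec (n : nat) :
  moment_ratio 2 (S n) = moment_ratio 2 n - 3 * moment_ratio 1 (S n) / (INR n + 1) ^ 2.
Proof.
  rewrite moment_ratio_rec. pose proof (pos_INR n). simpl INR. simpl Nat.sub. field. lra.
Qed.

Lemma sum_inv_sq (N : nat) :
  sum_n (fun n => / INR (S n) ^ 2) N = PI ^ 2 / 6 - 2 * moment_ratio 1 (S N).
Proof.
  induction N as [|N IH].
  - rewrite sum_O, moment_ratio_1_rec, moment_ratio_init. simpl. field.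
  - rewrite sum_Sn, IH, (moment_ratio_1_rec (S N)), !S_INR. unfold plus; simpl.
    pose proof (pos_INR N). field. lra.
Qed.

Lemma sum_inv_4 (N : nat) :
  sum_n (fun n => / INR (S n) ^ 4) N
  = PI ^ 4 / 90 + 4 / 3 * moment_ratio 2 (S N) - 4 * moment_ratio 1 (S N) ^ 2.
Proof.
  induction N as [|N IH].
  - rewrite sum_O, moment_ratio_2_rec, !moment_ratio_1_rec, !moment_ratio_init.
    simpl. field.
  - rewrite sum_Sn, IH, (moment_ratio_2_rec (S N)), (moment_ratio_1_rec (S N)).
    rewrite !S_INR. unfold plus; simpl. pose proof (pos_INR N). field. lra.
Qed.

(* Basel's problem: sum 1/(n+1)^2 = pi^2/6, as the ratio in sum_inv_sq tends to 0. *)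
Lemma is_series_inv_sq : is_series (fun n => / INR (S n) ^ 2) (PI ^ 2 / 6).
Proof.
  enough (H : is_lim_seq (sum_n (fun n => / INR (S n) ^ 2)) (PI ^ 2 / 6)) by exact H.
  apply is_lim_seq_ext with (u := fun N => PI ^ 2 / 6 - 2 * moment_ratio 1 (S N)).
  - intros N. symmetry. apply sum_inv_sq.
  - replace (Finite (PI ^ 2 / 6)) with (Finite (PI ^ 2 / 6 - 2 * 0)) by (f_equal; ring).
    apply (is_lim_seq_minus' _ _ _ _ (is_lim_seq_const _)).
    apply (is_lim_seq_scal_l _ 2 0), moment_ratio_lim.
Qed.

Lemma is_series_inv_4 : is_series (fun n => / INR (S n) ^ 4) (PI ^ 4 / 90).
Proof.
  enough (H : is_lim_seq (sum_n (fun n => / INR (S n) ^ 4)) (PI ^ 4 / 90)) by exact H.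
  apply is_lim_seq_ext with (u := fun N =>
    PI ^ 4 / 90 + 4 / 3 * moment_ratio 2 (S N) - 4 * (moment_ratio 1 (S N) * moment_ratio 1 (S N))).
  - intros N. rewrite sum_inv_4. ring.
  - replace (Finite (PI ^ 4 / 90))
      with (Finite (PI ^ 4 / 90 + 4 / 3 * 0 - 4 * (0 * 0))) by (f_equal; ring).
    apply is_lim_seq_minus'.
    + apply (is_lim_seq_plus' _ _ _ _ (is_lim_seq_const _)).
      apply (is_lim_seq_scal_l _ (4 / 3) 0), moment_ratio_lim.
    + apply (is_lim_seq_scal_l _ 4 (0 * 0)), is_lim_seq_mult'; apply moment_ratio_lim.
Qed.

Lemma zeta_2 : zeta_nat 2 = PI ^ 2 / 6.
Proof. apply is_series_unique, is_series_inv_sq. Qed.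

Lemma zeta_4 : zeta_nat 4 = PI ^ 4 / 90.
Proof. apply is_series_unique, is_series_inv_4. Qed.

(** * Elementary properties of zeta on integers s >= 2 *)

Lemma inv_pow_pos (s n : nat) : 0 < / INR (S n) ^ s.
Proof. pose proof (pos_INR n). rewrite S_INR. apply Rinv_0_lt_compat, pow_lt; lra. Qed.

Lemma inv_pow_antitone (s t n : nat) : (t <= s)%nat -> / INR (S n) ^ s <= / INR (S n) ^ t.
Proof.
  intros Hts. pose proof (pos_INR n). rewrite S_INR.
  apply Rinv_le_contravar; [apply pow_lt; lra|]. apply Rle_pow; [lra|exact Hts].
Qed.

Lemma ex_series_zeta (s : nat) : (2 <= s)%nat -> ex_series (fun n => / INR (S n) ^ s).
Proof.
  intros Hs. apply (@ex_series_le R_AbsRing R_CompleteNormedModule)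
    with (b := fun n => / INR (S n) ^ 2).
  - intros n. unfold norm; simpl. rewrite Rabs_pos_eq by apply Rlt_le, inv_pow_pos.
    exact (inv_pow_antitone s 2 n Hs).
  - exists (PI ^ 2 / 6). exact is_series_inv_sq.
Qed.

Lemma zeta_antitone (s t : nat) : (2 <= t)%nat -> (t <= s)%nat -> zeta_nat s <= zeta_nat t.
Proof.
  intros Ht Hts. unfold zeta_nat. apply Series_le; [|apply ex_series_zeta, Ht].
  intros n. split; [apply Rlt_le, inv_pow_pos | apply inv_pow_antitone, Hts].
Qed.

(* zeta(s) is at least its first term 1. *)
Lemma zeta_ge_1 (s : nat) : (2 <= s)%nat -> 1 <= zeta_nat s.
Proof.
  intros Hs. unfold zeta_nat. rewrite Series_incr_1 by (apply ex_series_zeta, Hs).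
  assert (Htail : 0 <= Series (fun n => / INR (S (S n)) ^ s)).
  { assert (Hzero : Series (fun _ => 0) = 0).
    { rewrite (Series_ext (fun _ => 0) (fun _ => 0 * 1)) by (intros; ring).
      rewrite Series_scal_l. ring. }
    rewrite <- Hzero. apply Series_le.
    - intros n; split; [lra| apply Rlt_le, inv_pow_pos].
    - apply (ex_series_incr_1 (fun n => / INR (S n) ^ s)), ex_series_zeta, Hs. }
  replace (/ INR 1 ^ s) with 1 by (simpl INR; rewrite pow1; field). lra.
Qed.

(* pi^4 >= 90, since zeta(4) >= 1. *)
Lemma PI4_ge_90 : 90 <= PI ^ 4.
Proof. pose proof (zeta_ge_1 4 ltac:(lia)) as H. rewrite zeta_4 in H. lra. Qed.

(** * The constants of Corollary 1 in terms of zeta *)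

Lemma pow_succ_pred (x : R) (n : nat) : (1 <= n)%nat -> x ^ n = x * x ^ (n - 1).
Proof. intros Hn. replace n with (S (n - 1)) at 1 by lia. reflexivity. Qed.

Lemma pow2_double (k : nat) : 2 ^ (2 * k) = 4 ^ k.
Proof. rewrite pow_mult. f_equal. ring. Qed.

Lemma pow2_quadruple (k : nat) : 2 ^ (4 * k) = (4 ^ k) ^ 2.
Proof. rewrite <- pow2_double, <- pow_mult. f_equal. lia. Qed.

Lemma r_zeta (k : nat) (r : R) :
  (1 <= k)%nat ->
  Binomial.C (4 * k) (2 * k) * bern k ^ 2 * r = bern (2 * k) ->
  r = zeta_nat (4 * k) / (2 * zeta_nat (2 * k) ^ 2).
Proof.
  intros Hk Hr. unfold bern, Binomial.C in Hr.
  replace (2 * (2 * k))%nat with (4 * k)%nat in Hr by lia.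
  replace (4 * k - 2 * k)%nat with (2 * k)%nat in Hr by lia.
  assert (H4 : 2 ^ (4 * k) = 2 * 2 ^ (4 * k - 1)) by (apply pow_succ_pred; lia).
  assert (H2 : 2 ^ (2 * k) = 2 * 2 ^ (2 * k - 1)) by (apply pow_succ_pred; lia).
  assert (H42 : 2 ^ (4 * k) = (2 ^ (2 * k)) ^ 2) by (rewrite <- pow_mult; f_equal; lia).
  assert (HPI : PI ^ (4 * k) = (PI ^ (2 * k)) ^ 2) by (rewrite <- pow_mult; f_equal; lia).
  assert (Hz2 : 1 <= zeta_nat (2 * k)) by (apply zeta_ge_1; lia).
  assert (HF2 : 0 < INR (fact (2 * k))) by apply INR_fact_lt_0.
  assert (HF4 : 0 < INR (fact (4 * k))) by apply INR_fact_lt_0.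
  assert (HP : 0 < PI ^ (2 * k)) by (apply pow_lt, PI_RGT_0).
  assert (Hq : 0 < 2 ^ (2 * k - 1)) by (apply pow_lt; lra).
  rewrite H2, H4 in H42. rewrite HPI in Hr.
  replace (2 ^ (4 * k - 1)) with (2 * (2 ^ (2 * k - 1)) ^ 2) in Hr by nra.
  set (q := 2 ^ (2 * k - 1)) in *. set (P := PI ^ (2 * k)) in *.
  set (z2 := zeta_nat (2 * k)) in *. set (z4 := zeta_nat (4 * k)) in *.
  set (F2 := INR (fact (2 * k))) in *. set (F4 := INR (fact (4 * k))) in *.
  assert (Hscale : 0 < F4 / (2 * q ^ 2 * P ^ 2) * (2 * z2 ^ 2)).
  { apply Rmult_lt_0_compat; [apply Rdiv_lt_0_compat|]; try nra.
    apply Rmult_lt_0_compat; [nra| apply pow_lt, HP]. }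
  apply (Rmult_eq_reg_l (F4 / (2 * q ^ 2 * P ^ 2) * (2 * z2 ^ 2)));
    [|apply Rgt_not_eq, Hscale].
  transitivity (F4 / (F2 * F2) * (F2 * z2 / (q * P)) ^ 2 * r); [field; repeat split; lra|].
  rewrite Hr. field. repeat split; lra.
Qed.

Lemma C_chi_zeta (k : nat) :
  (1 <= k)%nat -> C_chi k = 4 * (4 ^ k - 1) ^ 2 * zeta_nat (4 * k) / (PI ^ 4) ^ k.
Proof.
  intros Hk. unfold C_chi, bern.
  replace (2 * (2 * k))%nat with (4 * k)%nat by lia.
  assert (H41 : 2 ^ (4 * k + 1) = 4 * 2 ^ (4 * k - 1)).
  { rewrite pow_add, (pow_succ_pred 2 (4 * k)) by lia. ring. }
  assert (HF4 : 0 < INR (fact (4 * k))) by apply INR_fact_lt_0.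
  assert (Hq : 0 < 2 ^ (4 * k - 1)) by (apply pow_lt; lra).
  assert (HP : 0 < (PI ^ 4) ^ k) by (apply pow_lt, pow_lt, PI_RGT_0).
  rewrite H41, pow2_double, pow_mult. field. repeat split; lra.
Qed.

Lemma C_Td_pow4 (k : nat) (r : R) :
  (1 <= k)%nat ->
  C_Td k r = 2 * (4 ^ k) ^ 2 * (((4 ^ k) ^ 2 / 2 - 1) * (1 - r) + (3 - 2 * 4 ^ k)).
Proof.
  intros Hk. unfold C_Td.
  assert (H4 : 2 ^ (4 * k) = 2 * 2 ^ (4 * k - 1)) by (apply pow_succ_pred; lia).
  rewrite pow2_quadruple in H4.
  replace (2 ^ (4 * k - 1)) with ((4 ^ k) ^ 2 / 2) by lra.
  rewrite !pow_add, pow2_quadruple, pow2_double. ring.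
Qed.

(** * Estimates for k >= 2 *)

(* C_chi > 0, so the second ratio is well defined. *)
Lemma C_chi_zeta_pos (k : nat) :
  (1 <= k)%nat -> 0 < 4 * (4 ^ k - 1) ^ 2 * zeta_nat (4 * k) / (PI ^ 4) ^ k.
Proof.
  intros Hk.
  assert (H4k : 1 < 4 ^ k) by (apply Rlt_pow_R1; [lra | lia]).
  pose proof (zeta_ge_1 (4 * k) ltac:(lia)).
  apply Rdiv_lt_0_compat; [|apply pow_lt, pow_lt, PI_RGT_0].
  apply Rmult_lt_0_compat; [|lra].
  apply Rmult_lt_0_compat; [lra | apply pow_lt; lra].
Qed.

(* 0 <= r_k <= 1/2, since 1 <= zeta(4k) <= zeta(2k). *)
Lemma r_range (k : nat) :
  (1 <= k)%nat -> 0 <= zeta_nat (4 * k) / (2 * zeta_nat (2 * k) ^ 2) <= 1 / 2.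
Proof.
  intros Hk.
  assert (Hz2 : 1 <= zeta_nat (2 * k)) by (apply zeta_ge_1; lia).
  assert (Hz4 : 1 <= zeta_nat (4 * k)) by (apply zeta_ge_1; lia).
  assert (Hz42 : zeta_nat (4 * k) <= zeta_nat (2 * k)) by (apply zeta_antitone; lia).
  split.
  - apply Rdiv_le_0_compat; nra.
  - apply (Rmult_le_reg_r (2 * zeta_nat (2 * k) ^ 2)); [nra|].
    unfold Rdiv. rewrite Rmult_assoc, Rinv_l by nra. nra.
Qed.

Lemma pow_90_bound (k : nat) : (2 <= k)%nat -> 4 * (4 ^ k - 1) ^ 2 * 3 ^ k <= 90 ^ k.
Proof.
  intros Hk. induction Hk as [|k Hk IH]; [simpl; lra|].
  assert (Hx : 16 <= 4 ^ k).
  { replace 16 with (4 ^ 2) by ring. apply Rle_pow; [lra|exact Hk]. }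
  assert (HA : 0 < 3 ^ k) by (apply pow_lt; lra).
  simpl pow. set (x := 4 ^ k) in *. set (A := 3 ^ k) in *.
  assert (3 * (4 * x - 1) ^ 2 <= 90 * (x - 1) ^ 2) by nra.
  nra.
Qed.

(* 3^k C_chi <= 1 for k >= 2, using zeta(4k) <= zeta(4) = pi^4/90 <= 1. *)
Lemma chi_bound (k : nat) :
  (2 <= k)%nat -> 3 ^ k * (4 * (4 ^ k - 1) ^ 2 * zeta_nat (4 * k) / (PI ^ 4) ^ k) <= 1.
Proof.
  intros Hk.
  assert (Hz : zeta_nat (4 * k) <= PI ^ 4 / 90)
    by (rewrite <- zeta_4; apply zeta_antitone; lia).
  assert (Hz1 : 1 <= zeta_nat (4 * k)) by (apply zeta_ge_1; lia).
  pose proof PI4_ge_90 as H90. pose proof (pow_90_bound k Hk) as Hb.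
  assert (HQ : 90 ^ (k - 1) * PI ^ 4 <= (PI ^ 4) ^ k).
  { rewrite (pow_succ_pred (PI ^ 4) k), (Rmult_comm (PI ^ 4)) by lia.
    apply Rmult_le_compat_r; [lra|]. apply pow_incr. lra. }
  assert (H90k : 90 ^ k = 90 * 90 ^ (k - 1)) by (apply pow_succ_pred; lia).
  assert (H90p : 0 < 90 ^ (k - 1)) by (apply pow_lt; lra).
  assert (HC : 0 <= 4 * (4 ^ k - 1) ^ 2 * 3 ^ k)
    by (apply Rmult_le_pos; [apply Rmult_le_pos; [lra| apply pow2_ge_0]| apply pow_le; lra]).
  apply (Rmult_le_reg_r ((PI ^ 4) ^ k)); [nra|].
  replace (3 ^ k * (4 * (4 ^ k - 1) ^ 2 * zeta_nat (4 * k) / (PI ^ 4) ^ k) * (PI ^ 4) ^ k)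
    with (4 * (4 ^ k - 1) ^ 2 * 3 ^ k * zeta_nat (4 * k)) by (field; nra).
  apply Rle_trans with (90 ^ k * (PI ^ 4 / 90)); [|nra].
  apply Rle_trans with (4 * (4 ^ k - 1) ^ 2 * 3 ^ k * (PI ^ 4 / 90)).
  - apply Rmult_le_compat_l; lra.
  - apply Rmult_le_compat_r; lra.
Qed.

(* The two inequalities, once r, C_chi and 4^k satisfy the bounds for k >= 2. *)
Lemma ratio_inequalities (Q r X T : R) :
  16 <= Q -> 0 <= r <= 1 / 2 -> 0 < X -> T * X <= 1 -> 1 <= T ->
  2 * Q ^ 2 * ((Q ^ 2 / 2 - 1) * (1 - r) + (3 - 2 * Q)) / (1 + r + X) > Q
  /\ (1 + r) / X >= T.
Proof.
  intros HQ Hr HX HTX HT.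
  assert (HX1 : X <= 1) by nra.
  split.
  - apply Rlt_gt, (Rmult_lt_reg_r (1 + r + X)); [lra|].
    unfold Rdiv. rewrite Rmult_assoc, Rinv_l, Rmult_1_r by lra.
    assert (Hhalf : (Q ^ 2 / 2 - 1) * (1 - r) >= (Q ^ 2 / 2 - 1) / 2).
    { assert (0 <= (Q ^ 2 / 2 - 1) * (1 / 2 - r)) by (apply Rmult_le_pos; nra). lra. }
    assert (Hquad : Q ^ 2 / 4 - 2 * Q + 5 / 2 >= 34) by nra.
    nra.
  - apply Rle_ge, (Rmult_le_reg_r X); [lra|].
    unfold Rdiv. rewrite Rmult_assoc, Rinv_l, Rmult_1_r by lra. nra.
Qed.

(* For k = 1: r_1 = 1/5 and C_chi = 2/5, so C_sigma / C_chi = 3 exactly. *)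
Lemma r_1 : zeta_nat (4 * 1) / (2 * zeta_nat (2 * 1) ^ 2) = 1 / 5.
Proof.
  simpl Nat.mul. rewrite zeta_2, zeta_4. pose proof PI_RGT_0. field. lra.
Qed.

Lemma C_chi_1 : 4 * (4 ^ 1 - 1) ^ 2 * zeta_nat (4 * 1) / (PI ^ 4) ^ 1 = 2 / 5.
Proof.
  simpl Nat.mul. rewrite zeta_4. pose proof PI_RGT_0. field. lra.
Qed.

Theorem corollary1 (k : nat) (r : R) :
  (1 <= k)%nat ->
  Binomial.C (4 * k) (2 * k) * bern k ^ 2 * r = bern (2 * k) ->
  C_Td k r / (C_sigma r + C_chi k) > 4 ^ k /\
  C_sigma r / C_chi k >= 3 ^ k.
Proof.
  intros Hk Hr.
  rewrite (r_zeta k r Hk Hr), C_Td_pow4, C_chi_zeta by exact Hk. unfold C_sigma.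
  destruct (Nat.eq_dec k 1) as [-> | Hk1].
  - rewrite r_1, C_chi_1. simpl. split; lra.
  - apply ratio_inequalities.
    + replace 16 with (4 ^ 2) by ring. apply Rle_pow; [lra | lia].
    + apply r_range, Hk.
    + apply C_chi_zeta_pos. lia.
    + apply chi_bound. lia.
    + apply pow_R1_Rle. lra.
Qed.
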